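(* Let $X$ be a geodesic metric space, $Y$ a quasi-geodesic metric space and $f:Y\to X$ a quasi-isometric embedding. Then $Y$ is stable in $X$ in the sense of Durham--Taylor if and only if $f(Y)$ is $N$-stable as a subspace of $X$ for some Morse gauge $N$.
   Context: $Y$ is quasi-geodesic if there are $K\ge1,C\ge0$ such that any two points of $Y$ are joined by a $(K,C)$-quasi-geodesic in $Y$. $Y$ is stable in $X$ in the sense of Durham--Taylor (with respect to $f$) if for all $K,C$ there is $R=R(K,C)$ such that any two $(K,C)$-quasi-geodesics in $X$ with common endpoints in $f(Y)$ are at Hausdorff distance less than $R$. A Morse gauge is a function $N$ assigning to each $(K,C)$ a number $N(K,C)\ge0$; a geodesic $\gamma$ is $N$-Morse if every $(K,C)$-quasi-geodesic with endpoints on $\gamma$ lies in the $N(K,C)$-neighbourhood of $\gamma$. A subset $Z\subseteq X$ is $N$-stable if it is quasi-convex and any two points of $Z$ are joined by a geodesic of $X$ which is $N$-Morse. *)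

From Stdlib Require Import Reals.
Open Scope R_scope.

Record MetricSpace : Type := {
  mcarrier :> Type;
  dist : mcarrier -> mcarrier -> R;
  dist_refl : forall x, dist x x = 0;
  dist_eq0 : forall x y, dist x y = 0 -> x = y;
  dist_sym : forall x y, dist x y = dist y x;
  dist_tri : forall x y z, dist x z <= dist x y + dist y z
}.
Arguments dist {m} _ _.

(* A path  gamma : [a,b] -> M  is represented by a function R -> M together
   with its parameter interval [a,b] (a <= b); only values on [a,b] matter. *)

Definition is_quasi_geodesic {M : MetricSpace} (K C : R) (gamma : R -> M)
  (a b : R) : Prop :=
  a <= b /\
  forall s t, a <= s <= b -> a <= t <= b ->
    / K * Rabs (s - t) - C <= dist (gamma s) (gamma t) /\
    dist (gamma s) (gamma t) <= K * Rabs (s - t) + C.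

Definition is_geodesic {M : MetricSpace} (gamma : R -> M) (a b : R) : Prop :=
  a <= b /\
  forall s t, a <= s <= b -> a <= t <= b ->
    dist (gamma s) (gamma t) = Rabs (s - t).

Definition joins {M : MetricSpace} (gamma : R -> M) (a b : R) (x y : M) : Prop :=
  gamma a = x /\ gamma b = y.

Definition path_image {M : MetricSpace} (gamma : R -> M) (a b : R) (p : M) : Prop :=
  exists t, a <= t <= b /\ gamma t = p.

Definition geodesic_space (X : MetricSpace) : Prop :=
  forall x y : X, exists gamma a b, is_geodesic gamma a b /\ joins gamma a b x y.

Definition quasi_geodesic_space (Y : MetricSpace) : Prop :=
  exists K C, 1 <= K /\ 0 <= C /\
    forall x y : Y, exists gamma a b,
      is_quasi_geodesic K C gamma a b /\ joins gamma a b x y.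

Definition qi_embedding {Y X : MetricSpace} (f : Y -> X) : Prop :=
  exists L E, 1 <= L /\ 0 <= E /\
    forall y y' : Y,
      / L * dist y y' - E <= dist (f y) (f y') /\
      dist (f y) (f y') <= L * dist y y' + E.

Definition in_nbhd {M : MetricSpace} (A B : M -> Prop) (r : R) : Prop :=
  forall p, A p -> exists q, B q /\ dist p q <= r.

(* Hausdorff distance between A and B is less than R0:
   inf { r | A in N_r(B) and B in N_r(A) } < R0. *)
Definition hausdorff_lt {M : MetricSpace} (A B : M -> Prop) (R0 : R) : Prop :=
  exists r, r < R0 /\ in_nbhd A B r /\ in_nbhd B A r.

Definition image {Y X : Type} (f : Y -> X) (p : X) : Prop :=
  exists y, f y = p.

Definition DT_stable {Y X : MetricSpace} (f : Y -> X) : Prop :=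
  forall K C, 1 <= K -> 0 <= C ->
    exists R0, forall (x y : X) g1 a1 b1 g2 a2 b2,
      image f x -> image f y ->
      is_quasi_geodesic K C g1 a1 b1 -> joins g1 a1 b1 x y ->
      is_quasi_geodesic K C g2 a2 b2 -> joins g2 a2 b2 x y ->
      hausdorff_lt (path_image g1 a1 b1) (path_image g2 a2 b2) R0.

Definition morse_gauge (N : R -> R -> R) : Prop :=
  forall K C, 1 <= K -> 0 <= C -> 0 <= N K C.

Definition is_N_Morse {X : MetricSpace} (N : R -> R -> R) (gamma : R -> X)
  (a b : R) : Prop :=
  forall K C, 1 <= K -> 0 <= C ->
    forall q s t, is_quasi_geodesic K C q s t ->
      path_image gamma a b (q s) -> path_image gamma a b (q t) ->
      in_nbhd (path_image q s t) (path_image gamma a b) (N K C).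

Definition quasi_convex {X : MetricSpace} (Z : X -> Prop) : Prop :=
  exists Q, 0 <= Q /\
    forall x y gamma a b, Z x -> Z y -> is_geodesic gamma a b ->
      joins gamma a b x y -> in_nbhd (path_image gamma a b) Z Q.

Definition N_stable {X : MetricSpace} (N : R -> R -> R) (Z : X -> Prop) : Prop :=
  quasi_convex Z /\
  forall x y, Z x -> Z y ->
    exists gamma a b, is_geodesic gamma a b /\ joins gamma a b x y /\
      is_N_Morse N gamma a b.

(* A quasi-geodesic with the same endpoints as an N-Morse geodesic lies N-close to it; conversely,
   walking along the quasi-geodesic in unit parameter steps, each step of length at most K + C,
   some step must jump across any given point of the geodesic, which is therefore close to the
   quasi-geodesic too. Morse geodesics between points of f(Y) thus yield Durham--Taylor stability.

   In the other direction, stability applied to a geodesic and to the image of a quasi-geodesic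
   of Y makes f(Y) Q-quasi-convex. Given a (K,C)-quasi-geodesic with endpoints on a geodesic
   between points of f(Y), move its endpoints, and those of the geodesic subsegment between them,
   to points of f(Y) within Q: both become (K, C + 2Q)-quasi-geodesics with common endpoints in
   f(Y), hence close by stability, which gives the gauge N(K,C) = R(K, C + 2Q) + 2Q. *)

From Stdlib Require Import Rbase Rbasic_fun Lra Classical IndefiniteDescription.
Open Scope R_scope.

Arguments dist_refl {m} x.
Arguments dist_sym {m} x y.
Arguments dist_tri {m} x y z.

Definition DT_bound {Y X : MetricSpace} (f : Y -> X) (K C R0 : R) : Prop :=
  forall (x y : X) g1 a1 b1 g2 a2 b2,
    image f x -> image f y ->
    is_quasi_geodesic K C g1 a1 b1 -> joins g1 a1 b1 x y ->
    is_quasi_geodesic K C g2 a2 b2 -> joins g2 a2 b2 x y ->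
    hausdorff_lt (path_image g1 a1 b1) (path_image g2 a2 b2) R0.

Section Neighbourhoods.

Context {M : MetricSpace}.
Implicit Types A B Z : M -> Prop.

Lemma in_nbhd_mono {A B} r r' : r <= r' -> in_nbhd A B r -> in_nbhd A B r'.
Proof.
  intros Hr H p Hp. destruct (H p Hp) as [q [Hq Hd]]. exists q; split; auto; lra.
Qed.

Lemma in_nbhd_weaken_r {A B B'} r :
  (forall p, B p -> B' p) -> in_nbhd A B r -> in_nbhd A B' r.
Proof.
  intros HB H p Hp. destruct (H p Hp) as [q [Hq Hd]]. exists q; auto.
Qed.

Lemma in_nbhd_trans {A B Z} r r' :
  in_nbhd A B r -> in_nbhd B Z r' -> in_nbhd A Z (r + r').
Proof.
  intros H H' p Hp. destruct (H p Hp) as [q [Hq Hd]].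
  destruct (H' q Hq) as [w [Hw Hd']]. exists w. split; auto.
  pose proof (dist_tri p q w). lra.
Qed.

Lemma in_nbhd_choice {A B r} :
  in_nbhd A B r -> exists F : M -> M, forall p, A p -> B (F p) /\ dist p (F p) <= r.
Proof.
  intros H. apply (functional_choice (fun p q => A p -> B q /\ dist p q <= r)).
  intros p. destruct (classic (A p)) as [Hp | Hp].
  - destruct (H p Hp) as [q Hq]. exists q; auto.
  - exists p. contradiction.
Qed.

Lemma in_nbhd_pointwise (p p' : R -> M) s t r :
  (forall u, dist (p u) (p' u) <= r) ->
  in_nbhd (path_image p s t) (path_image p' s t) r.
Proof.
  intros H z [u [Hu <-]]. exists (p' u). split; [exists u; auto | apply H].
Qed.

End Neighbourhoods.

Section Paths.

Context {M : MetricSpace}.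

Lemma geodesic_quasi_geodesic (g : R -> M) a b K C :
  1 <= K -> 0 <= C -> is_geodesic g a b -> is_quasi_geodesic K C g a b.
Proof.
  intros HK HC [Hab Hg]. split; auto. intros s t Hs Ht. rewrite (Hg s t Hs Ht).
  pose proof (Rabs_pos (s - t)).
  assert (/ K <= 1) by (rewrite <- Rinv_1; apply Rinv_le_contravar; lra).
  split; nra.
Qed.

Lemma geodesic_subpath (g : R -> M) a b u v :
  is_geodesic g a b -> a <= u <= b -> a <= v <= b ->
  exists p d, is_geodesic p 0 d /\ p 0 = g u /\ p d = g v /\
    (forall z, path_image p 0 d z -> path_image g a b z).
Proof.
  intros [_ Hg] Hu Hv.
  set (e := if Rle_dec u v then 1 else -1).
  assert (He1 : Rabs e = 1) by (unfold e, Rabs; destruct (Rle_dec u v), Rcase_abs; lra).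
  assert (Hev : e * Rabs (v - u) = v - u).
  { unfold e; destruct (Rle_dec u v).
    - rewrite Rabs_right by lra. ring.
    - rewrite Rabs_left by lra. ring. }
  assert (Hin : forall r, 0 <= r <= Rabs (v - u) -> a <= u + e * r <= b).
  { intros r Hr. unfold e in *; destruct (Rle_dec u v).
    - rewrite Rabs_right in Hr; lra.
    - rewrite Rabs_left in Hr; lra. }
  exists (fun r => g (u + e * r)), (Rabs (v - u)). repeat split.
  - apply Rabs_pos.
  - intros r1 r2 H1 H2. rewrite (Hg _ _ (Hin r1 H1) (Hin r2 H2)).
    replace (u + e * r1 - (u + e * r2)) with (e * (r1 - r2)) by ring.
    rewrite Rabs_mult, He1. ring.
  - f_equal; ring.
  - f_equal. rewrite Hev. ring.
  - intros z [r [Hr <-]]. exists (u + e * r). auto.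
Qed.

Lemma quasi_geodesic_chain (q : R -> M) K C s t :
  0 <= K -> is_quasi_geodesic K C q s t ->
  exists (c : nat -> R) n, c O = s /\ c n = t /\ (forall i, s <= c i <= t) /\
    (forall i, dist (q (c i)) (q (c (S i))) <= K + C).
Proof.
  intros HK [Hst Hq].
  destruct (INR_archimed 1 (t - s)) as [n Hn]; [lra|].
  exists (fun i => Rmin t (s + INR i)), n.
  assert (Hin : forall i, s <= Rmin t (s + INR i) <= t).
  { intro i. pose proof (pos_INR i). unfold Rmin; destruct (Rle_dec t (s + INR i)); lra. }
  repeat split; try apply Hin.
  - simpl. rewrite Rplus_0_r. unfold Rmin; destruct (Rle_dec t s); lra.
  - unfold Rmin; destruct (Rle_dec t (s + INR n)); lra.
  - intro i. destruct (Hq _ _ (Hin i) (Hin (S i))) as [_ Hup].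
    assert (Rabs (Rmin t (s + INR i) - Rmin t (s + INR (S i))) <= 1).
    { rewrite S_INR. pose proof (pos_INR i). apply Rabs_le.
      unfold Rmin; destruct (Rle_dec t (s + INR i)), (Rle_dec t (s + (INR i + 1))); lra. }
    nra.
Qed.

Definition snap_ends (F : M -> M) (q : R -> M) (s t r : R) : M :=
  if Req_dec_T r s then F (q s) else if Req_dec_T r t then F (q t) else q r.

Lemma snap_ends_close F q s t Q :
  0 <= Q -> dist (q s) (F (q s)) <= Q -> dist (q t) (F (q t)) <= Q ->
  forall r, dist (q r) (snap_ends F q s t r) <= Q.
Proof.
  intros HQ Hs Ht r. unfold snap_ends.
  destruct (Req_dec_T r s); [subst; auto|].
  destruct (Req_dec_T r t); [subst; auto|]. rewrite dist_refl; auto.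
Qed.

Lemma snap_ends_joins F q s t : joins (snap_ends F q s t) s t (F (q s)) (F (q t)).
Proof.
  unfold joins, snap_ends. split.
  - destruct (Req_dec_T s s); [auto|congruence].
  - destruct (Req_dec_T t s); [subst; auto|].
    destruct (Req_dec_T t t); [auto|congruence].
Qed.

Lemma snap_ends_quasi_geodesic F q s t Q K C :
  0 <= Q -> dist (q s) (F (q s)) <= Q -> dist (q t) (F (q t)) <= Q ->
  is_quasi_geodesic K C q s t -> is_quasi_geodesic K (C + 2 * Q) (snap_ends F q s t) s t.
Proof.
  intros HQ Hs Ht [Hst Hq]. split; auto. intros u v Hu Hv.
  pose proof (snap_ends_close F q s t Q HQ Hs Ht) as Hc.
  destruct (Hq u v Hu Hv) as [H1 H2].
  set (m := snap_ends F q s t) in *.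
  pose proof (Hc u). pose proof (Hc v).
  pose proof (dist_tri (m u) (q u) (m v)). pose proof (dist_tri (q u) (q v) (m v)).
  pose proof (dist_tri (q u) (m u) (q v)). pose proof (dist_tri (m u) (m v) (q v)).
  rewrite (dist_sym (m u) (q u)) in *. rewrite (dist_sym (q v) (m v)) in *.
  split; lra.
Qed.

End Paths.

Lemma discrete_crossing (P Q : nat -> Prop) :
  P O -> (forall i, P i \/ Q i) -> forall n, (exists i, P i /\ Q (S i)) \/ P n.
Proof.
  intros H0 HPQ n. induction n as [|n [Hcross | HPn]]; auto.
  destruct (HPQ (S n)); eauto.
Qed.

Section FellowTravelling.

Context {M : MetricSpace}.

Lemma geodesic_crossing_bound (g : R -> M) a b u v1 v2 (z w : M) N D :
  is_geodesic g a b -> a <= v1 <= u -> u <= v2 <= b ->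
  dist z (g v1) <= N -> dist w (g v2) <= N -> dist z w <= D ->
  dist (g u) z <= 3 * N + D.
Proof.
  intros [_ Hg] Hv1 Hv2 Hz Hw Hzw.
  assert (Hspan : v2 - v1 <= 2 * N + D).
  { assert (dist (g v1) (g v2) = v2 - v1) by (rewrite Hg, Rabs_left1 by lra; ring).
    pose proof (dist_tri (g v1) z (g v2)). pose proof (dist_tri z w (g v2)).
    rewrite (dist_sym (g v1) z) in *. lra. }
  pose proof (dist_tri (g u) (g v1) z). rewrite (dist_sym (g v1) z) in *.
  rewrite (Hg u v1), Rabs_right in * by lra. lra.
Qed.

Lemma geodesic_near_quasi_geodesic (g q : R -> M) a b s t K C N :
  0 <= K -> 0 <= K + C -> 0 <= N ->
  is_geodesic g a b -> is_quasi_geodesic K C q s t -> q s = g a -> q t = g b ->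
  in_nbhd (path_image q s t) (path_image g a b) N ->
  in_nbhd (path_image g a b) (path_image q s t) (3 * N + K + C).
Proof.
  intros HK HKC HN Hg Hq Hqs Hqt Hnear p [u [Hu <-]].
  destruct (quasi_geodesic_chain q K C s t HK Hq) as [c [n [Hc0 [Hcn [Hc Hstep]]]]].
  set (Below := fun i => exists v, a <= v <= u /\ dist (q (c i)) (g v) <= N).
  set (Above := fun i => exists v, u <= v <= b /\ dist (q (c i)) (g v) <= N).
  assert (Hside : forall i, Below i \/ Above i).
  { intro i. destruct (Hnear (q (c i))) as [w [[v [Hv <-]] Hd]]; [exists (c i); auto|].
    destruct (Rle_dec v u); [left | right]; exists v; split; auto; lra. }
  assert (Hstart : Below O).
  { exists a. rewrite Hc0, Hqs, dist_refl. destruct Hg. lra. }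
  replace (3 * N + K + C) with (3 * N + (K + C)) by ring.
  destruct (discrete_crossing Below Above Hstart Hside n)
    as [[i [[v1 [Hv1 H1]] [v2 [Hv2 H2]]]] | [v1 [Hv1 H1]]].
  - exists (q (c i)). split; [exists (c i); auto|].
    eapply geodesic_crossing_bound; eauto.
  - exists (q t). split; [exists t; destruct Hq; split; [lra | auto]|].
    rewrite Hcn in H1.
    apply (geodesic_crossing_bound g a b u v1 b (q t) (q t) N); auto.
    + destruct Hg; lra.
    + rewrite Hqt, dist_refl. lra.
    + rewrite dist_refl. lra.
Qed.

Lemma quasi_geodesic_near_Morse_geodesic N (g q : R -> M) a b s t K C :
  1 <= K -> 0 <= C -> 0 <= N K C ->
  is_geodesic g a b -> is_N_Morse N g a b ->
  is_quasi_geodesic K C q s t -> q s = g a -> q t = g b ->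
  in_nbhd (path_image q s t) (path_image g a b) (N K C) /\
  in_nbhd (path_image g a b) (path_image q s t) (3 * N K C + K + C).
Proof.
  intros HK HC HN Hg HMorse Hq Hqs Hqt.
  assert (Hab : a <= b) by (destruct Hg; auto).
  assert (Hnear : in_nbhd (path_image q s t) (path_image g a b) (N K C)).
  { apply (HMorse K C HK HC q s t Hq).
    - exists a. split; [lra | auto].
    - exists b. split; [lra | auto]. }
  split; auto. apply (geodesic_near_quasi_geodesic g q a b s t); auto; lra.
Qed.

End FellowTravelling.

Lemma N_stable_DT_stable {Y X : MetricSpace} (f : Y -> X) N :
  morse_gauge N -> N_stable N (image f) -> DT_stable f.
Proof.
  intros HN [_ Hgeod] K C HK HC.
  exists (4 * N K C + K + C + 1).
  intros x y g1 a1 b1 g2 a2 b2 Hx Hy Hq1 [H1a H1b] Hq2 [H2a H2b].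
  destruct (Hgeod x y Hx Hy) as [g [a [b [Hg [[Hga Hgb] HMorse]]]]].
  rewrite <- Hga in H1a, H2a. rewrite <- Hgb in H1b, H2b. pose proof (HN K C HK HC).
  destruct (quasi_geodesic_near_Morse_geodesic N g g1 a b a1 b1 K C)
    as [A1 B1]; auto.
  destruct (quasi_geodesic_near_Morse_geodesic N g g2 a b a2 b2 K C)
    as [A2 B2]; auto.
  exists (4 * N K C + K + C). split; [lra|].
  replace (4 * N K C + K + C) with (N K C + (3 * N K C + K + C)) by ring.
  split; eapply in_nbhd_trans; eauto.
Qed.

Section DurhamTaylor.

Context {Y X : MetricSpace} (f : Y -> X).

Lemma qi_map_quasi_geodesic L E K C (c : R -> Y) a b :
  1 <= L -> 0 <= E -> 1 <= K -> 0 <= C ->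
  (forall y y', / L * dist y y' - E <= dist (f y) (f y') /\
                dist (f y) (f y') <= L * dist y y' + E) ->
  is_quasi_geodesic K C c a b ->
  is_quasi_geodesic (L * K) (L * C + E) (fun r => f (c r)) a b.
Proof.
  intros HL HE HK HC Hf [Hab Hc]. split; auto. intros s t Hs Ht.
  destruct (Hc s t Hs Ht) as [Hlo Hup]. destruct (Hf (c s) (c t)) as [Hflo Hfup].
  assert (HiL : 0 < / L <= 1).
  { split; [apply Rinv_0_lt_compat; lra|]. rewrite <- Rinv_1. apply Rinv_le_contravar; lra. }
  assert (HiK : 0 < / K) by (apply Rinv_0_lt_compat; lra).
  rewrite Rinv_mult. pose proof (Rabs_pos (s - t)).
  assert (/ L * (/ K * Rabs (s - t) - C) <= / L * dist (c s) (c t))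
    by (apply Rmult_le_compat_l; lra).
  assert (L * dist (c s) (c t) <= L * (K * Rabs (s - t) + C))
    by (apply Rmult_le_compat_l; lra).
  split; nra.
Qed.

Lemma DT_stable_quasi_convex :
  quasi_geodesic_space Y -> qi_embedding f -> DT_stable f -> quasi_convex (image f).
Proof.
  intros [K [C [HK [HC HY]]]] [L [E [HL [HE Hf]]]] HDT.
  assert (HLK : 1 <= L * K) by nra.
  assert (HLC : 0 <= L * C + E) by nra.
  destruct (HDT _ _ HLK HLC) as [R1 HR1].
  exists (Rmax 0 R1). split; [apply Rmax_l|].
  intros x y g a b [y0 <-] [y1 <-] Hg Hj.
  destruct (HY y0 y1) as [c [a' [b' [Hc [Hc0 Hc1]]]]].
  assert (Hfc : joins (fun r => f (c r)) a' b' (f y0) (f y1))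
    by (unfold joins; rewrite Hc0, Hc1; auto).
  destruct (HR1 _ _ g a b _ a' b' (ex_intro _ y0 eq_refl) (ex_intro _ y1 eq_refl)
    (geodesic_quasi_geodesic g a b _ _ HLK HLC Hg) Hj
    (qi_map_quasi_geodesic L E K C c a' b' HL HE HK HC Hf Hc) Hfc) as [r [Hr [Hnear _]]].
  apply (in_nbhd_mono r); [pose proof (Rmax_r 0 R1); lra|].
  apply (in_nbhd_weaken_r r) with (2 := Hnear).
  intros p [t [_ <-]]. exists (c t). auto.
Qed.

Lemma DT_stable_bounds :
  DT_stable f -> exists R0 : R -> R -> R,
    forall K C, 1 <= K -> 0 <= C -> DT_bound f K C (R0 K C).
Proof.
  intros HDT.
  destruct (functional_choice
    (fun KC R0 => 1 <= fst KC -> 0 <= snd KC -> DT_bound f (fst KC) (snd KC) R0))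
    as [R0 HR0].
  { intros [K C]. simpl.
    destruct (classic (1 <= K /\ 0 <= C)) as [[HK HC] | Hbad].
    - destruct (HDT K C HK HC) as [R0 HR0]. exists R0. auto.
    - exists 0. intros HK HC. exfalso. auto. }
  exists (fun K C => R0 (K, C)). intros K C. exact (HR0 (K, C)).
Qed.

Lemma DT_bound_Morse_bound K C R0 Q (g : R -> X) a b :
  1 <= K -> 0 <= C -> 0 <= Q -> DT_bound f K (C + 2 * Q) R0 ->
  is_geodesic g a b -> in_nbhd (path_image g a b) (image f) Q ->
  forall q s t, is_quasi_geodesic K C q s t ->
    path_image g a b (q s) -> path_image g a b (q t) ->
    in_nbhd (path_image q s t) (path_image g a b) (R0 + 2 * Q).
Proof.
  intros HK HC HQ HR0 Hg Hnear q s t Hq Hqs Hqt.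
  destruct (in_nbhd_choice Hnear) as [F HF].
  destruct (HF _ Hqs) as [HFs HdFs]. destruct (HF _ Hqt) as [HFt HdFt].
  destruct Hqs as [u [Hu Hgu]]. destruct Hqt as [v [Hv Hgv]].
  destruct (geodesic_subpath g a b u v Hg Hu Hv) as [p [d [Hp [Hp0 [Hpd Hpg]]]]].
  rewrite Hgu in Hp0. rewrite Hgv in Hpd.
  rewrite <- Hp0 in HdFs. rewrite <- Hpd in HdFt.
  pose proof (snap_ends_quasi_geodesic F p 0 d Q K C HQ HdFs HdFt
    (geodesic_quasi_geodesic p 0 d K C HK HC Hp)) as Hp'.
  pose proof (snap_ends_joins F p 0 d) as Hjp'.
  rewrite Hp0, Hpd in Hjp'. rewrite Hp0 in HdFs. rewrite Hpd in HdFt.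
  pose proof (snap_ends_quasi_geodesic F q s t Q K C HQ HdFs HdFt Hq) as Hq'.
  destruct (HR0 _ _ _ _ _ _ _ _ HFs HFt Hq' (snap_ends_joins F q s t) Hp' Hjp')
    as [r [Hr [Hq'p' _]]].
  assert (Hqq' : in_nbhd (path_image q s t) (path_image (snap_ends F q s t) s t) Q)
    by (apply in_nbhd_pointwise, snap_ends_close; auto).
  assert (Hp'p : in_nbhd (path_image (snap_ends F p 0 d) 0 d) (path_image p 0 d) Q).
  { apply in_nbhd_pointwise. intro w. rewrite dist_sym.
    apply snap_ends_close; rewrite ?Hp0, ?Hpd; auto. }
  apply (in_nbhd_mono (Q + r + Q)); [lra|].
  apply (in_nbhd_weaken_r _ Hpg).
  exact (in_nbhd_trans _ _ (in_nbhd_trans _ _ Hqq' Hq'p') Hp'p).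
Qed.

Lemma DT_stable_N_stable :
  geodesic_space X -> quasi_geodesic_space Y -> qi_embedding f -> DT_stable f ->
  exists N : R -> R -> R, morse_gauge N /\ N_stable N (image f).
Proof.
  intros HX HY Hf HDT.
  destruct (DT_stable_quasi_convex HY Hf HDT) as [Q [HQ Hqc]].
  destruct (DT_stable_bounds HDT) as [R0 HR0].
  exists (fun K C => Rmax 0 (R0 K (C + 2 * Q)) + 2 * Q). split.
  { intros K C _ _. pose proof (Rmax_l 0 (R0 K (C + 2 * Q))). lra. }
  split; [exists Q; auto|].
  intros x y Hx Hy. destruct (HX x y) as [g [a [b [Hg Hj]]]].
  exists g, a, b. split; [exact Hg | split; [exact Hj |]].
  intros K C HK HC q s t Hq Hqs Hqt.
  apply (in_nbhd_mono (R0 K (C + 2 * Q) + 2 * Q));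
    [pose proof (Rmax_r 0 (R0 K (C + 2 * Q))); lra|].
  apply (DT_bound_Morse_bound K C _ Q g a b); auto.
  - apply HR0; lra.
  - exact (Hqc x y g a b Hx Hy Hg Hj).
Qed.

End DurhamTaylor.

Theorem lemma3p8 (X Y : MetricSpace) (f : Y -> X) :
  geodesic_space X -> quasi_geodesic_space Y -> qi_embedding f ->
  (DT_stable f <-> exists N : R -> R -> R, morse_gauge N /\ N_stable N (image f)).
Proof.
  intros HX HY Hf. split.
  - exact (DT_stable_N_stable f HX HY Hf).
  - intros [N [HN Hstable]]. exact (N_stable_DT_stable f N HN Hstable).
Qed.
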